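(* Consider the boundary driven Kawasaki process on $\{0,1\}^N$ with $N\geq 5$ and $\mu_L>\kappa>0>\mu_R$, $|\mu_R|>\kappa$. Let $x\in\mathcal{P}$. If $U(x,y)=0$, then $y\in\mathcal{E}$, and moreover $U(y,z)=0$ implies $z=x$.
   Context: Configurations $x\in\{0,1\}^N$; energy $E(x)=-\kappa\sum_{i=1}^{N-1}x(i)x(i+1)$. $x^{i,j}$: occupations of $i,j$ exchanged; $x^i$ ($i\in\{1,N\}$): occupation of $i$ flipped. Transitions: for $|i-j|=1$, $x(i)\neq x(j)$, $x\to x^{i,j}$ at rate $\exp[-\frac\beta2(E(x^{i,j})-E(x))]$; for $i\in\{1,N\}$, $x\to x^i$ at rate $\exp[\frac{\beta\mu_i}{2}(1-2x(i))]\exp[-\frac\beta2(E(x^i)-E(x))]$, $\mu_1=\mu_L$, $\mu_N=\mu_R$. For an allowed transition $x\to y$ let $\phi(x,y)=\lim_{\beta\to\infty}\frac1\beta\log k(x\to y)$, $\Gamma(x)=-\max_y\phi(x,y)$, $U(x,y)=-\phi(x,y)-\Gamma(x)\geq0$. A configuration is written by its blocks $x=(p_0,q_0,\dots,p_n,q_n)$: reading from site 1, $p_0$ consecutive occupied sites, then $q_0$ vacant sites, then $p_1$ occupied, etc., with $\sum_i(p_i+q_i)=N$. $\mathcal{P}$ is the set of configurations $(p_0,q_0,\dots,p_n,q_n)$ with $p_i\geq 3$ for all $i$, $q_i\geq 3$ for all $i<n$, and $q_n\geq 2$. $\mathcal{E}$ is the set of configurations obtained from some $x\in\mathcal{P}$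 by a single nearest-neighbour exchange that either turns a local pattern $\dots 11100\dots$ (right end of an occupied block) into $\dots 11010\dots$, or turns a local pattern $\dots 000111\dots$ (left end of an occupied block) into $\dots 001011\dots$. *)

From HB Require Import structures.
From mathcomp Require Import all_boot all_order all_algebra.
From mathcomp Require Import all_classical all_reals all_analysis.
Set Implicit Arguments. Unset Strict Implicit. Unset Printing Implicit Defensive.
Import Order.TTheory GRing.Theory Num.Theory.
Import numFieldNormedType.Exports.
Local Open Scope ring_scope.

(* Sites 1..N of the paper are the indices 0..N-1 here. *)
Definition config (N : nat) := {ffun 'I_N -> bool}.

Section Kawasaki.
Variables (R : realType) (N : nat).

(* occupation of site j (0-based); false outside the chain (never used there) *)
Definition occ (x : config N) (j : nat) : bool :=
  if insub j is Some i then x i else false.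

Definition swap (x : config N) (j : nat) : config N :=
  [ffun i : 'I_N => if val i == j then occ x j.+1
                    else if val i == j.+1 then occ x j else x i].

Definition flip (x : config N) (j : nat) : config N :=
  [ffun i : 'I_N => if val i == j then ~~ occ x j else x i].

Definition b2R (b : bool) : R := (b : nat)%:R.

Definition energy (kappa : R) (x : config N) : R :=
  - kappa * \sum_(0 <= i < N.-1) b2R (occ x i) * b2R (occ x i.+1).

Definition rate (kappa muL muR beta : R) (x y : config N) : R :=
  \sum_(i < N.-1 | (occ x i != occ x i.+1) && (swap x i == y))
     expR (- (beta / 2) * (energy kappa (swap x i) - energy kappa x))
  + (if flip x 0 == y then
       expR (beta * muL / 2 * (1 - 2 * b2R (occ x 0))) *
       expR (- (beta / 2) * (energy kappa (flip x 0) - energy kappa x))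
     else 0)
  + (if flip x N.-1 == y then
       expR (beta * muR / 2 * (1 - 2 * b2R (occ x N.-1))) *
       expR (- (beta / 2) * (energy kappa (flip x N.-1) - energy kappa x))
     else 0).

Definition allowed (x y : config N) : bool :=
  [exists i : 'I_N.-1, (occ x i != occ x i.+1) && (swap x i == y)]
  || (flip x 0 == y) || (flip x N.-1 == y).

Definition phi (kappa muL muR : R) (x y : config N) : R :=
  lim ((ln (rate kappa muL muR beta x y) / beta) @[beta --> +oo])%classic.

(* Gamma(x) = - max_{y allowed} phi(x,y).  The max is over the nonempty finite
   set of allowed y; the seed phi(x, x^1) is itself one of the maximised values
   (the flip at site 1 is always allowed). *)
Definition Gamma (kappa muL muR : R) (x : config N) : R :=
  - \big[Num.max/phi kappa muL muR x (flip x 0)]_(y | allowed x y)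
        phi kappa muL muR x y.

Definition U (kappa muL muR : R) (x y : config N) : R :=
  - phi kappa muL muR x y - Gamma kappa muL muR x.

End Kawasaki.

Section Blocks.
Variable N : nat.

Definition occ_seq (x : config N) : seq bool := [seq occ x i | i <- iota 0 N].

Definition of_blocks (s : seq (nat * nat)) : seq bool :=
  flatten [seq nseq pq.1 true ++ nseq pq.2 false | pq <- s].

Definition in_calP (x : config N) : Prop :=
  exists s : seq (nat * nat),
    [/\ s != [::], occ_seq x = of_blocks s,
        (forall i, i < size s -> 3 <= (nth (0, 0) s i).1)%N,
        (forall i, i.+1 < size s -> 3 <= (nth (0, 0) s i).2)%N
      & (2 <= (nth (0, 0) s (size s).-1).2)%N].

Definition in_calE (y : config N) : Prop :=
  exists x : config N, in_calP x /\ exists j : nat,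
    (* ...11100... -> ...11010... at sites j-2..j+2 (exchange of j, j+1) *)
    ([/\ (2 <= j)%N, (j + 2 < N)%N,
         [&& occ x (j - 2), occ x (j - 1), occ x j,
             ~~ occ x j.+1 & ~~ occ x j.+2]
       & y = swap x j]
    \/
    (* ...000111... -> ...001011... at sites j-2..j+3 (exchange of j, j+1) *)
     [/\ (2 <= j)%N, (j + 3 < N)%N,
         [&& ~~ occ x (j - 2), ~~ occ x (j - 1), ~~ occ x j,
             occ x j.+1, occ x j.+2 & occ x j.+3]
       & y = swap x j]).

End Blocks.

(* Write E = -kappa * pairs, where pairs counts adjacent occupied sites.  Each
   rate is exp(beta * c) for an explicit exponent c, so phi is c: kappa/2 times
   the change of pairs, plus +-mu/2 for a flip at an end.  In a configuration x
   of P the chain starts with three occupied and ends with two vacant sites and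
   every later block has length at least 3, so every exchange at an interface
   breaks exactly one pair (phi = -kappa/2), whereas both end flips have a
   strictly smaller exponent because mu_L > kappa and mu_R < -kappa.  Hence
   U(x,y) = 0 exactly when y is such an exchange, and the 6-site window around it
   is one of the two patterns defining E.  From y the reverse exchange restores
   the broken pair (phi = kappa/2); every other exchange creates at most one pair
   and, by inspection of that window, none of them creates one, while both end
   flips have exponent below kappa/2.  So x is the only z with U(y,z) = 0. *)

From HB Require Import structures.
From mathcomp Require Import all_boot all_order all_algebra.
From mathcomp Require Import all_classical all_reals all_analysis.
From mathcomp Require Import zify ring lra.
Import Order.TTheory GRing.Theory Num.Theory.
Import numFieldNormedType.Exports.
Set Implicit Arguments. Unset Strict Implicit. Unset Printing Implicit Defensive.
Local Open Scope ring_scope.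

Section Configurations.
Variable N : nat.
Implicit Types x y : config N.

Lemma occ_oob x k : (N <= k)%N -> occ x k = false.
Proof. by move=> h; rewrite /occ insubN // -leqNgt. Qed.

Lemma occ_lt x k (hk : (k < N)%N) : occ x k = x (Ordinal hk).
Proof. by rewrite /occ insubT. Qed.

Lemma occ_ord x (i : 'I_N) : occ x i = x i.
Proof. by rewrite /occ valK. Qed.

Lemma config_eq x y : (forall k, (k < N)%N -> occ x k = occ y k) -> x = y.
Proof. by move=> h; apply/ffunP => i; rewrite -!occ_ord h. Qed.

Lemma occ_swap x j k : (j.+1 < N)%N ->
  occ (swap x j) k =
  if k == j then occ x j.+1 else if k == j.+1 then occ x j else occ x k.
Proof.
move=> hj; case: (ltnP k N) => hk.
  by rewrite occ_lt ffunE /= -(occ_lt x hk).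
by rewrite !ifN_eq ?occ_oob //; lia.
Qed.

Lemma occ_flip x j k : (j < N)%N ->
  occ (flip x j) k = if k == j then ~~ occ x j else occ x k.
Proof.
move=> hj; case: (ltnP k N) => hk.
  by rewrite occ_lt ffunE /= -(occ_lt x hk).
by rewrite ifN_eq ?occ_oob //; lia.
Qed.

End Configurations.

(* Evaluates [occ (swap x j) k] when the offset of [k] from [j] is known. *)
Ltac simpl_occ_swap :=
  rewrite ?occ_swap; [rewrite ?eqxx /=; repeat (rewrite ifN_eq; last by lia) | lia..].

Section Transitions.
Variable N : nat.
Implicit Types x y : config N.

Lemma occ_swap_out x j k : (j.+1 < N)%N -> (k < j)%N || (j.+1 < k)%N ->
  occ (swap x j) k = occ x k.
Proof. by move=> hj hk; simpl_occ_swap. Qed.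

Lemma swapK x j : (j.+1 < N)%N -> swap (swap x j) j = x.
Proof.
move=> hj; apply: config_eq => k _; rewrite !occ_swap //.
by case: eqVneq => [->|_]; [simpl_occ_swap | case: eqVneq => [->|]; simpl_occ_swap].
Qed.

Lemma swap_interface x j : (j.+1 < N)%N -> occ x j != occ x j.+1 ->
  occ (swap x j) j != occ (swap x j) j.+1.
Proof. by move=> hj dj; simpl_occ_swap; rewrite eq_sym. Qed.

Lemma swap_inj x i j : (i.+1 < N)%N -> (j.+1 < N)%N ->
  occ x i != occ x i.+1 -> occ x j != occ x j.+1 -> swap x i = swap x j -> i = j.
Proof.
wlog le_ij : i j / (i <= j)%N => [hw hi hj di dj e|hi hj di _ e].
  by case: (leqP i j) => h; [|apply/esym]; apply: hw => //; lia.
apply/eqP; rewrite eqn_leq le_ij /=; apply/negP => le_ji.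
move: (congr1 (fun z => occ z i) e); simpl_occ_swap.
by move/eqP; rewrite eq_sym (negPf di).
Qed.

Lemma flip0_neq_swap x j : (j.+1 < N)%N -> occ x j != occ x j.+1 ->
  flip x 0 != swap x j.
Proof.
move=> hj dj; apply/eqP => /(congr1 (fun z => occ z j.+1)).
rewrite occ_flip; last lia.
by simpl_occ_swap; move/eqP; rewrite eq_sym (negPf dj).
Qed.

Lemma flipN_neq_swap x j : (j.+1 < N)%N -> occ x j != occ x j.+1 ->
  flip x N.-1 != swap x j.
Proof.
move=> hj dj; apply/eqP => /(congr1 (fun z => occ z j)).
rewrite occ_flip; last lia.
rewrite ifN_eq; last lia.
by simpl_occ_swap; move/eqP; rewrite (negPf dj).
Qed.

Lemma flip0_neq_flipN x : (1 < N)%N -> flip x 0 != flip x N.-1.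
Proof.
move=> hN; apply/eqP => /(congr1 (fun z => occ z 0%N)).
rewrite !occ_flip ?eqxx; try lia.
by rewrite ifN_eq; [case: (occ x 0) | lia].
Qed.

Lemma allowed_cases x y : allowed x y ->
  (exists j, [/\ (j.+1 < N)%N, occ x j != occ x j.+1 & y = swap x j])
  \/ y = flip x 0 \/ y = flip x N.-1.
Proof.
case/orP => [/orP [/existsP [i /andP [di /eqP <-]] | /eqP <-] | /eqP <-].
- by left; exists i; split => //; have := ltn_ord i; lia.
- by right; left.
- by right; right.
Qed.

Lemma allowed_swap x j : (j.+1 < N)%N -> occ x j != occ x j.+1 ->
  allowed x (swap x j).
Proof.
move=> hj dj; apply/orP; left; apply/orP; left; apply/existsP.
have hj' : (j < N.-1)%N by lia.
by exists (Ordinal hj'); rewrite /= dj eqxx.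
Qed.

Lemma allowed_flip0 x : allowed x (flip x 0).
Proof. by rewrite /allowed eqxx orbT. Qed.

End Transitions.

Section Pairs.
Variable N : nat.
Implicit Types x y : config N.

Definition pairs x : nat := \sum_(0 <= k < N) (occ x k && occ x k.+1).

Lemma pairs_window x y a n : (a + n <= N)%N ->
  (forall k, (k < a)%N || (a + n <= k)%N ->
     (occ y k && occ y k.+1) = (occ x k && occ x k.+1)) ->
  (pairs y + \sum_(a <= k < a + n) (occ x k && occ x k.+1) =
   pairs x + \sum_(a <= k < a + n) (occ y k && occ y k.+1))%N.
Proof.
move=> hn hout; rewrite /pairs.
have out_eq m p : (forall k, (m <= k < p)%N -> (k < a)%N || (a + n <= k)%N) ->
    (\sum_(m <= k < p) (occ y k && occ y k.+1) =
     \sum_(m <= k < p) (occ x k && occ x k.+1))%N.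
  by move=> h; apply: eq_big_nat => k hk; rewrite hout ?h.
rewrite !(big_cat_nat (leq0n (a + n)) hn) !(big_cat_nat (leq0n a) (leq_addr n a)).
rewrite /= (out_eq 0%N a) ?(out_eq (a + n)%N N) => [|k|k]; lia.
Qed.

Lemma pairs_swap x i : (i.+2 < N)%N ->
  (pairs (swap x i.+1) + (occ x i && occ x i.+1) + (occ x i.+2 && occ x i.+3) =
   pairs x + (occ x i && occ x i.+2) + (occ x i.+1 && occ x i.+3))%N.
Proof.
move=> hi.
have hout k : (k < i)%N || (i + 3 <= k)%N ->
    (occ (swap x i.+1) k && occ (swap x i.+1) k.+1) = (occ x k && occ x k.+1).
  by move=> hk; simpl_occ_swap.
have := @pairs_window x (swap x i.+1) i 3 ltac:(lia) hout.
rewrite addn3 !big_nat_recl; try lia.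
by rewrite !(big_geq (leqnn i)); simpl_occ_swap; lia.
Qed.

Lemma pairs_swap_le x i : (i.+2 < N)%N -> occ x i.+1 != occ x i.+2 ->
  (pairs (swap x i.+1) <= (pairs x).+1)%N.
Proof.
move=> hi di; have := pairs_swap x hi.
by move: di; case: (occ x i) (occ x i.+1) (occ x i.+2) (occ x i.+3) => [] [] [] [] //=; lia.
Qed.

Lemma pairs_flip0 x : (0 < N)%N ->
  (pairs (flip x 0) + (occ x 0 && occ x 1) = pairs x + (~~ occ x 0 && occ x 1))%N.
Proof.
move=> hN.
have hout k : (k < 0)%N || (0 + 1 <= k)%N ->
    (occ (flip x 0) k && occ (flip x 0) k.+1) = (occ x k && occ x k.+1).
  by move=> hk; rewrite !occ_flip // !ifN_eq //; lia.
have := @pairs_window x (flip x 0) 0 1 hN hout.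
by rewrite !big_nat1 !occ_flip // eqxx ifN_eq //; lia.
Qed.

Lemma pairs_flipN x : (1 < N)%N ->
  (pairs (flip x N.-1) + (occ x N.-2 && occ x N.-1) =
   pairs x + (occ x N.-2 && ~~ occ x N.-1))%N.
Proof.
move=> hN; have [n [en1 en2]] : exists n, N.-2 = n /\ N.-1 = n.+1 by exists N.-2; lia.
rewrite en1 en2.
have hout k : (k < n)%N || (n + 2 <= k)%N ->
    (occ (flip x n.+1) k && occ (flip x n.+1) k.+1) = (occ x k && occ x k.+1).
  by move=> hk; rewrite !occ_flip ?ifN_eq //; lia.
have := @pairs_window x (flip x n.+1) n 2 ltac:(lia) hout.
rewrite addn2 !big_nat_recl ?(big_geq (leqnn n)) // !occ_flip ?eqxx ?ifN_eq; try lia.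
by rewrite (@occ_oob _ x n.+2) ?andbF; lia.
Qed.

End Pairs.

Section Exponents.
Variables (R : realType) (N : nat) (kappa muL muR : R).
Implicit Types x y : config N.

Lemma energy_pairs x : energy kappa x = - kappa * (pairs x)%:R.
Proof.
rewrite /energy /pairs (big_cat_nat (leq0n N.-1) (leq_pred N)) /=.
rewrite [X in (_ + X)%N]big1_seq ?addn0 => [|k /andP [_]]; last first.
  by rewrite mem_index_iota => hk; rewrite [occ x k.+1]occ_oob ?andbF //; lia.
rewrite natr_sum; congr (_ * _); apply: eq_bigr => k _.
by rewrite /b2R; case: (occ x k); case: (occ x k.+1); rewrite /= ?mul1r ?mul0r.
Qed.

Lemma rate_swap x j beta : (j.+1 < N)%N -> occ x j != occ x j.+1 ->
  rate kappa muL muR beta x (swap x j) =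
  expR (beta * (kappa / 2 * ((pairs (swap x j))%:R - (pairs x)%:R))).
Proof.
move=> hj dj; have hj' : (j < N.-1)%N by lia.
rewrite /rate (big_pred1 (Ordinal hj')) => [|i /=]; last first.
  apply/andP/eqP => [[di /eqP e]|-> //]; apply: val_inj => /=.
  by apply: (swap_inj _ _ di dj e) => //; have := ltn_ord i; lia.
rewrite (negPf (flip0_neq_swap hj dj)) (negPf (flipN_neq_swap hj dj)) !addr0.
by rewrite !energy_pairs; congr expR; ring.
Qed.

Lemma rate_flip0 x beta : (1 < N)%N ->
  rate kappa muL muR beta x (flip x 0) =
  expR (beta * (muL / 2 * (1 - 2 * b2R R (occ x 0)) +
     kappa / 2 * ((pairs (flip x 0))%:R - (pairs x)%:R))).
Proof.
move=> hN; rewrite /rate big_pred0 => [|i]; last first.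
  apply/negP => /andP [di /eqP e].
  have hi : (i.+1 < N)%N by have := ltn_ord i; lia.
  by move: (flip0_neq_swap hi di); rewrite e eqxx.
rewrite eqxx eq_sym (negPf (flip0_neq_flipN x hN)) add0r addr0 !energy_pairs -expRD.
by congr expR; ring.
Qed.

Lemma rate_flipN x beta : (1 < N)%N ->
  rate kappa muL muR beta x (flip x N.-1) =
  expR (beta * (muR / 2 * (1 - 2 * b2R R (occ x N.-1)) +
     kappa / 2 * ((pairs (flip x N.-1))%:R - (pairs x)%:R))).
Proof.
move=> hN; rewrite /rate big_pred0 => [|i]; last first.
  apply/negP => /andP [di /eqP e].
  have hi : (i.+1 < N)%N by have := ltn_ord i; lia.
  by move: (flipN_neq_swap hi di); rewrite e eqxx.
rewrite eqxx (negPf (flip0_neq_flipN x hN)) !add0r !energy_pairs -expRD.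
by congr expR; ring.
Qed.

Lemma phi_exponent x y c :
  (forall beta, rate kappa muL muR beta x y = expR (beta * c)) ->
  phi kappa muL muR x y = c.
Proof.
move=> hrate; apply: cvg_lim => //; apply: cvg_near_cst.
by near=> beta; rewrite hrate expRK mulrAC divff ?mul1r // gt_eqF.
Unshelve. all: end_near.
Qed.

Lemma phi_swap x j : (j.+1 < N)%N -> occ x j != occ x j.+1 ->
  phi kappa muL muR x (swap x j) =
  kappa / 2 * ((pairs (swap x j))%:R - (pairs x)%:R).
Proof. by move=> hj dj; apply: phi_exponent => beta; rewrite rate_swap. Qed.

Lemma phi_flip0 x : (1 < N)%N ->
  phi kappa muL muR x (flip x 0) =
  muL / 2 * (1 - 2 * b2R R (occ x 0)) +
  kappa / 2 * ((pairs (flip x 0))%:R - (pairs x)%:R).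
Proof. by move=> hN; apply: phi_exponent => beta; rewrite rate_flip0. Qed.

Lemma phi_flipN x : (1 < N)%N ->
  phi kappa muL muR x (flip x N.-1) =
  muR / 2 * (1 - 2 * b2R R (occ x N.-1)) +
  kappa / 2 * ((pairs (flip x N.-1))%:R - (pairs x)%:R).
Proof. by move=> hN; apply: phi_exponent => beta; rewrite rate_flipN. Qed.

Lemma Gamma_eq x y0 M : allowed x y0 -> phi kappa muL muR x y0 = M ->
  (forall y, allowed x y -> phi kappa muL muR x y <= M) ->
  Gamma kappa muL muR x = - M.
Proof.
move=> xy0 <- le_M; congr (- _); apply/le_anti/andP; split.
  by apply: bigmax_le => [|y /le_M //]; apply/le_M/allowed_flip0.
exact: le_bigmax_cond.
Qed.

End Exponents.

(* Holding at every position of the chain, padded with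
   vacant sites, it says that all blocks but the first have length at least 3. *)
Definition steady3 (a b c d : bool) : bool := (a != b) ==> (b == c) && (c == d).

Fixpoint all_steady3 (s : seq bool) : bool :=
  if s is a :: t then
    steady3 a (nth false t 0) (nth false t 1) (nth false t 2) && all_steady3 t
  else true.

Lemma all_steady3P s : all_steady3 s -> forall i,
  steady3 (nth false s i) (nth false s i.+1) (nth false s i.+2) (nth false s i.+3).
Proof.
elim: s => [_ i|a t IH /= /andP [ha ht] [|i]] //; first by rewrite !nth_nil.
exact: IH.
Qed.

Lemma all_steady3_nseq p b t : all_steady3 t ->
  steady3 b (nth false t 0) (nth false t 1) (nth false t 2) ->
  all_steady3 (nseq p b ++ t).
Proof.
move=> ht hb; elim: p => [//|p IH] /=; rewrite IH andbT.
by case: p {IH} => [//|p]; rewrite /steady3 eqxx.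
Qed.

Lemma nth_nseq_cat p (b : bool) t i : (i < p)%N -> nth false (nseq p b ++ t) i = b.
Proof. by move=> hi; rewrite nth_cat size_nseq hi nth_nseq hi. Qed.

Lemma of_blocks_cons p q s :
  of_blocks ((p, q) :: s) = nseq p true ++ (nseq q false ++ of_blocks s).
Proof. by rewrite /of_blocks /= catA. Qed.

Lemma all_steady3_blocks s :
  (forall i, (i < size s)%N -> (3 <= (nth (0, 0) s i).1)%N) ->
  (forall i, (i.+1 < size s)%N -> (3 <= (nth (0, 0) s i).2)%N) ->
  (2 <= (nth (0, 0) s (size s).-1).2)%N -> all_steady3 (of_blocks s).
Proof.
elim: s => [//|[p q] s IH] hp hq hl; rewrite of_blocks_cons.
have p3 : (3 <= p)%N := hp 0%N isT.
case: s IH hp hq hl => [|[p' q'] s] IH hp hq hl.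
  apply: all_steady3_nseq; first exact: all_steady3_nseq.
  by rewrite cats0 !nth_nseq !if_same.
have p'3 : (3 <= p')%N := hp 1%N isT.
have q3 : (3 <= q)%N := hq 0%N isT.
apply: all_steady3_nseq; last by rewrite !nth_nseq_cat //; lia.
apply: all_steady3_nseq; last by rewrite of_blocks_cons !nth_nseq_cat //; lia.
by apply: IH => [i /(hp i.+1)|i /(hq i.+1)|].
Qed.

Lemma size_occ_seq N (x : config N) : size (occ_seq x) = N.
Proof. by rewrite size_map size_iota. Qed.

Lemma occ_seq_nth N (x : config N) i : nth false (occ_seq x) i = occ x i.
Proof.
rewrite /occ_seq; case: (ltnP i N) => hi.
  by rewrite (nth_map 0%N) ?size_iota // nth_iota.
by rewrite nth_default ?size_map ?size_iota // occ_oob.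
Qed.

Section CalP.
Variables (N : nat) (x : config N).
Hypothesis xP : in_calP x.

Lemma calP_steady3 i : steady3 (occ x i) (occ x i.+1) (occ x i.+2) (occ x i.+3).
Proof.
case: xP => s [_ hs hp hq hl]; rewrite -!occ_seq_nth hs.
exact: all_steady3P (all_steady3_blocks hp hq hl) i.
Qed.

Lemma calP_head k : (k < 3)%N -> occ x k.
Proof.
case: xP => s [sne hs hp _ _] hk; case: s sne hs hp => [//|[p q] s] _ hs hp.
by rewrite -occ_seq_nth hs of_blocks_cons nth_nseq_cat //; have /= := hp 0%N isT; lia.
Qed.

Lemma calP_size : (2 < N)%N.
Proof. by case: ltnP (calP_head (k := 2) isT) => // h; rewrite occ_oob. Qed.

Lemma calP_tail k : (N.-2 <= k)%N -> ~~ occ x k.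
Proof.
case: xP => s [sne hs _ _ hl] hk.
case/lastP: s sne hs hl => [//|s [p q]] _ hs.
rewrite size_rcons nth_rcons ltnn eqxx /= => hl.
have {}hs : occ_seq x = (of_blocks s ++ nseq p true) ++ nseq q false.
  by rewrite hs /of_blocks map_rcons -cats1 flatten_cat /= cats0 catA.
have hN := congr1 size hs; rewrite size_occ_seq size_cat size_nseq in hN.
rewrite -occ_seq_nth hs nth_cat ifN; last lia.
by rewrite nth_nseq if_same.
Qed.

Lemma calP_interface j : occ x j != occ x j.+1 ->
  exists2 m, j = m.+2 &
  [/\ (m.+4 < N)%N, occ x m = occ x m.+2, occ x m.+1 = occ x m.+2,
      occ x m.+4 = occ x m.+3 & occ x m.+4.+1 = occ x m.+3].
Proof.
move=> dj; have [m ej] : exists m, j = m.+2.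
  by case: j dj => [|[|m]] dj; [rewrite !calP_head in dj..|exists m].
exists m => //; rewrite {}ej in dj; split.
- case: (ltnP m.+4 N) => // hm; move: dj.
  by rewrite (negPf (calP_tail (k := m.+2) _)) ?(negPf (calP_tail (k := m.+3) _)) //; lia.
all: move: dj (calP_steady3 m) (calP_steady3 m.+1) (calP_steady3 m.+2); rewrite /steady3.
all: by case: (occ x m) (occ x m.+1) (occ x m.+2) (occ x m.+3) (occ x m.+4) (occ x m.+4.+1)
  => [] [] [] [] [] [].
Qed.

Lemma calP_has_interface : exists j, (j.+1 < N)%N /\ occ x j != occ x j.+1.
Proof.
have reach k : (k < N)%N -> occ x k \/ exists j, (j.+1 < N)%N /\ occ x j != occ x j.+1.
  elim: k => [|k IH] hk; first by left; apply: calP_head.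
  case: (IH (ltnW hk)) => [xk|]; last by right.
  case: (boolP (occ x k.+1)) => xk1; first by left.
  by right; exists k; rewrite xk (negPf xk1).
have hN : (N.-1 < N)%N by have := calP_size; lia.
by case: (reach _ hN) => // xN; move: (calP_tail (leq_pred _)); rewrite xN.
Qed.

Lemma calP_interface_pairs k : occ x k.+1 != occ x k.+2 ->
  ((occ x k && occ x k.+1) + (occ x k.+2 && occ x k.+3) =
   ((occ x k && occ x k.+2) + (occ x k.+1 && occ x k.+3)).+1)%N.
Proof.
move=> dk; have [m [ek] [_ _ e1 e4 _]] := calP_interface dk; subst k.
by rewrite e1 e4; move: dk; case: (occ x m.+2) (occ x m.+3) => [] [].
Qed.

Lemma pairs_swap_calP j : (j.+1 < N)%N -> occ x j != occ x j.+1 ->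
  (pairs (swap x j)).+1 = pairs x.
Proof.
move=> hj dj; have [m ej _] := calP_interface dj; subst j.
by have := pairs_swap x hj; have := calP_interface_pairs dj; lia.
Qed.

Lemma calE_swap j : occ x j != occ x j.+1 -> in_calE (swap x j).
Proof.
move=> dj; have [m ej [hm e0 e1 e4 e5]] := calP_interface dj; subst j.
exists x; split => //; exists m.+2; rewrite !subSS !subn0.
case: (boolP (occ x m.+2)) => a.
  left; split => //; first lia.
  by rewrite e0 e1 e4 a; move: dj; rewrite a; case: (occ x m.+3).
have b : occ x m.+3 by move: dj; rewrite (negPf a); case: (occ x m.+3).
right; split => //.
- by case: (ltnP m.+4.+1 N) => h; [lia | move: b; rewrite -e5 occ_oob].
- by rewrite e0 e1 e4 e5 (negPf a) b.
Qed.

End CalP.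

Section SwapCalP.
Variables (N : nat) (x : config N) (m : nat).
Hypotheses (xP : in_calP x) (dm : occ x m.+2 != occ x m.+3).
Local Notation y := (swap x m.+2).
Local Notation a := (occ x m.+2).
Local Notation b := (occ x m.+3).

Lemma calP_interface_window : [/\ (m.+4 < N)%N, occ x m = a, occ x m.+1 = a,
  occ x m.+4 = b & occ x m.+4.+1 = b].
Proof. by have [m' [->]] := calP_interface xP dm. Qed.

Lemma swap_calP_left : [/\ occ y m = a, occ y m.+1 = a & occ y m.+2 = b].
Proof.
have [hm e0 e1 _ _] := calP_interface_window.
by simpl_occ_swap; rewrite e0 e1.
Qed.

Lemma swap_calP_right : [/\ occ y m.+3 = a, occ y m.+4 = b & occ y m.+4.+1 = b].
Proof.
have [hm _ _ e4 e5] := calP_interface_window.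
by simpl_occ_swap; rewrite e4 e5.
Qed.

Lemma swap_calP_ends : [/\ occ y 0, occ y 1 & ~~ occ y N.-1].
Proof.
have [hm _ _ _ _] := calP_interface_window.
split; rewrite occ_swap_out; try lia.
- by apply: (calP_head xP).
- by apply: (calP_head xP).
- by apply: (calP_tail xP); apply: leq_pred.
Qed.

Lemma swap_calP_interface_pos i : occ y i != occ y i.+1 -> (0 < i)%N.
Proof. by case: i => // /negP []; have [-> -> _] := swap_calP_ends. Qed.

Lemma pairs_swap_calP_unique i : (i.+1 < N)%N -> occ y i != occ y i.+1 ->
  pairs (swap y i) = (pairs y).+1 -> i = m.+2.
Proof.
move=> hi di e; have [k ek] : exists k, i = k.+1.
  by exists i.-1; have := swap_calP_interface_pos di; lia.
subst i; have := pairs_swap y hi; rewrite e.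
have [hm _ _ _ _] := calP_interface_window.
have [w0 w1 w2] := swap_calP_left; have [w3 w4 w5] := swap_calP_right.
case: (ltnP k.+1 m) => [far|near]; last case: (ltnP m.+4 k.+1) => [far|near'].
- move: di; rewrite !occ_swap_out; [|lia..] => di.
  by have := calP_interface_pairs xP di; lia.
- move: di; rewrite !occ_swap_out; [|lia..] => di.
  by have := calP_interface_pairs xP di; lia.
have : k.+1 = m \/ k = m \/ k = m.+1 \/ k = m.+2 \/ k = m.+3 by lia.
case=> [ek|[ek|[ek|[ek|ek]]]]; first by move: di; rewrite ek w0 w1 eqxx.
- by subst k; rewrite w0 w1 w2 w3; move: dm; case: (occ x m.+2) (occ x m.+3) => [] [] //=; lia.
- by subst k.
- by subst k; rewrite w2 w3 w4 w5; move: dm; case: (occ x m.+2) (occ x m.+3) => [] [] //=; lia.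
- by subst k; move: di; rewrite w4 w5 eqxx.
Qed.

End SwapCalP.

Lemma b2R_true (R : realType) : b2R R true = 1.
Proof. exact: mulr1n. Qed.

Lemma b2R_false (R : realType) : b2R R false = 0.
Proof. exact: mulr0n. Qed.

Section FlipExponents.
Variables (R : realType) (N : nat) (kappa muL muR : R).
Implicit Types x : config N.

Lemma phi_flip0_occupied x : (1 < N)%N -> occ x 0 ->
  phi kappa muL muR x (flip x 0) = - (muL / 2) - kappa / 2 * b2R R (occ x 1).
Proof.
move=> hN x0; have := pairs_flip0 x (ltnW hN); rewrite phi_flip0 // x0 /= addn0 => <-.
by rewrite natrD /b2R /=; ring.
Qed.

Lemma phi_flipN_vacant x : (1 < N)%N -> ~~ occ x N.-1 ->
  phi kappa muL muR x (flip x N.-1) = muR / 2 + kappa / 2 * b2R R (occ x N.-2).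
Proof.
move=> hN xN; have := pairs_flipN x hN; rewrite phi_flipN // (negPf xN) andbF andbT.
by rewrite addn0 => ->; rewrite natrD /b2R /=; ring.
Qed.

End FlipExponents.

Section Main.
Variables (R : realType) (N : nat) (kappa muL muR : R).
Hypotheses (kappa_gt0 : 0 < kappa) (kappa_lt_muL : kappa < muL)
  (muR_lt : muR < - kappa).
Implicit Types x y z : config N.

Lemma phi_calP_swap x j : in_calP x -> (j.+1 < N)%N -> occ x j != occ x j.+1 ->
  phi kappa muL muR x (swap x j) = - (kappa / 2).
Proof.
move=> xP hj dj.
by rewrite phi_swap // -(pairs_swap_calP xP hj dj) -addn1 natrD; ring.
Qed.

Lemma phi_calP x y : in_calP x -> allowed x y ->
  (exists2 j, (j.+1 < N)%N /\ occ x j != occ x j.+1 & y = swap x j)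
  \/ phi kappa muL muR x y < - (kappa / 2).
Proof.
move=> xP /allowed_cases [[j [hj dj ->]]|[->|->]]; first by left; exists j.
all: have hN : (1 < N)%N by have := calP_size xP; lia.
- rewrite phi_flip0_occupied //; last exact: (calP_head xP).
  by right; rewrite (calP_head xP) // b2R_true; move: kappa_gt0 kappa_lt_muL; lra.
- rewrite phi_flipN_vacant //; last by apply: (calP_tail xP); apply: leq_pred.
  by right; rewrite (negPf (calP_tail xP (leqnn _))) b2R_false; move: muR_lt; lra.
Qed.

Lemma Gamma_calP x : in_calP x -> Gamma kappa muL muR x = kappa / 2.
Proof.
move=> xP; have [j [hj dj]] := calP_has_interface xP.
rewrite (@Gamma_eq _ _ _ _ _ _ (swap x j) (- (kappa / 2))) ?opprK //.
- exact: allowed_swap.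
- exact: phi_calP_swap.
- move=> y /(phi_calP xP) [[i [hi di] ->]|/ltW //].
  by rewrite phi_calP_swap.
Qed.

Lemma U_calP_eq0 x y : in_calP x -> allowed x y -> U kappa muL muR x y = 0 ->
  exists2 j, (j.+1 < N)%N /\ occ x j != occ x j.+1 & y = swap x j.
Proof.
move=> xP xy; rewrite /U (Gamma_calP xP) => U0.
by case: (phi_calP xP xy) => // ?; exfalso; lra.
Qed.

Lemma phi_swap_calP_back x j : in_calP x -> (j.+1 < N)%N -> occ x j != occ x j.+1 ->
  phi kappa muL muR (swap x j) x = kappa / 2.
Proof.
move=> xP hj dj; rewrite -{2}(swapK x hj) phi_swap ?swapK ?swap_interface //.
by rewrite -(pairs_swap_calP xP hj dj) -addn1 natrD; ring.
Qed.

Lemma phi_swap_calP x j z : in_calP x -> (j.+1 < N)%N -> occ x j != occ x j.+1 ->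
  allowed (swap x j) z -> z = x \/ phi kappa muL muR (swap x j) z < kappa / 2.
Proof.
move=> xP hj dj; have [m ej _] := calP_interface xP dj; subst j.
have hN : (1 < N)%N by have := calP_size xP; lia.
have [y0 y1 yN] := swap_calP_ends xP dj.
case/allowed_cases => [[i [hi di ->]]|[->|->]].
- have [k ek] : exists k, i = k.+1.
    by exists i.-1; have := swap_calP_interface_pos xP dj di; lia.
  subst i; have := pairs_swap_le hi di; rewrite leq_eqVlt ltnS => /orP [/eqP e|le].
    by left; rewrite (pairs_swap_calP_unique xP dj hi di e) swapK.
  right; rewrite phi_swap //; move: le; rewrite -(ler_nat R).
  by move: kappa_gt0; nra.
- by right; rewrite phi_flip0_occupied // y1 b2R_true; move: kappa_gt0 kappa_lt_muL; lra.
- right; rewrite phi_flipN_vacant //; case: (occ _ N.-2); rewrite ?b2R_true ?b2R_false.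
  all: by move: kappa_gt0 muR_lt; lra.
Qed.

Lemma Gamma_swap_calP x j : in_calP x -> (j.+1 < N)%N -> occ x j != occ x j.+1 ->
  Gamma kappa muL muR (swap x j) = - (kappa / 2).
Proof.
move=> xP hj dj; apply: (@Gamma_eq _ _ _ _ _ _ x).
- by rewrite -{2}(swapK x hj) allowed_swap ?swap_interface.
- exact: phi_swap_calP_back.
- by move=> z /(phi_swap_calP xP hj dj) [->|/ltW //]; rewrite phi_swap_calP_back.
Qed.

Lemma U_swap_calP_eq0 x j z : in_calP x -> (j.+1 < N)%N -> occ x j != occ x j.+1 ->
  allowed (swap x j) z -> U kappa muL muR (swap x j) z = 0 -> z = x.
Proof.
move=> xP hj dj yz; rewrite /U (Gamma_swap_calP xP hj dj) => U0.
by case: (phi_swap_calP xP hj dj yz) => // ?; exfalso; lra.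
Qed.

End Main.

Theorem lemma1 (R : realType) (N : nat) (kappa muL muR : R)
  (hN : (5 <= N)%N) (hkappa : 0 < kappa) (hL : kappa < muL) (hR : muR < 0)
  (hRk : kappa < `|muR|) (x y : config N) :
  in_calP x -> allowed x y -> U kappa muL muR x y = 0 ->
  in_calE y /\
  (forall z : config N, allowed y z -> U kappa muL muR y z = 0 -> z = x).
Proof.
move=> xP xy Uxy.
have muR_lt : muR < - kappa by move: hRk; rewrite ltr0_norm //; lra.
have [j [hj dj] ->] := U_calP_eq0 hkappa hL muR_lt xP xy Uxy.
split; first exact: calE_swap.
by move=> z; apply: U_swap_calP_eq0.
Qed.
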